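(* Let $s,t,z$ be positive integers and let $N_{\text{AGE}}$ be the quantity defined in the context. Then $N_{\text{AGE}}\le N_{\text{Ent}}$, $N_{\text{AGE}}\le N_{\text{SSMM}}$, $N_{\text{AGE}}\le N_{\text{GCSA-NA}}$, and, whenever $s,t$ are not both $1$, $N_{\text{AGE}}\le N_{\text{PolyDot}}$, where these are defined in the context.
   Context: $N_{\text{AGE}}=2s+2z-1$ if $t=1$, and for $t\ge2$, $N_{\text{AGE}}=\min_{\lambda\in\{0,\dots,z\}}\Gamma(\lambda)$ with $\theta=ts+\lambda$, $q=\min\{\lfloor\frac{z-1}{\lambda}\rfloor,t-1\}$ ($q=t-1$ when $\lambda=0$), and $\Gamma(\lambda)=2st^2+2z-1$ if $z>ts-s,\lambda=0$; $st^2+3st-2s+t(z-1)+1$ if $z\le ts-s,\lambda=0$; $2ts+(ts+z)(t-1)+2z-1$ if $\lambda=z$; $(q+2)ts+\theta(t-1)+2z-1$ if $z>ts,0<\lambda<z$; $3ts+\theta(t-1)+2z-1$ if $z\le ts,0<\lambda<z,ts<\lambda+s-1$; $2ts+\theta(t-1)+(q+2)z-q-1$ if $\lambda+s-1<z\le ts,0<\lambda<z,q\lambda\ge s$; $\theta(t+1)+q(z-1)-2\lambda+z+ts+\min\{0,z+s(1-t)-\lambda q-1\}$ if $\lambda+s-1<z\le ts,0<\lambda<z,q\lambda<s$; $2ts+\theta(t-1)+3z+(\lambda+s-1)q-\lambda-s-1$ if $z\le\lambda+s-1\le ts,0<\lambda<z,q\lambda\ge s$; $\theta(t+1)+q(s-1)-3\lambda+3z-1+\min\{0,ts-z+1+\lambda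 q-s\}$ if $z\le\lambda+s-1\le ts,0<\lambda<z,q\lambda<s$. (This is the number of workers of AGE-CMPC.) Baselines: $N_{\text{Ent}}=2st^2+2z-1$ if $z>ts-s$ and $st^2+3st-2s+tz-t+1$ if $z\le ts-s$ (Entangled-CMPC); $N_{\text{SSMM}}=(t+1)(ts+z)-1$; $N_{\text{GCSA-NA}}=2st^2+2z-1$ (single product). With $\theta'=2ts-t$, $p=\min\{\lfloor\frac{z-1}{\theta'-ts}\rfloor,t-1\}$ ($p=t-1$ when $s=1$), $\upsilon'=\max\{ts-2t-s+2,\frac{ts-2t+1}{2}\}$: $N_{\text{PolyDot}}=(p+2)ts+\theta'(t-1)+2z-1$ if $ts<z$ or $t=1$; $2ts+\theta'(t-1)+3z-1$ if $ts-t<z\le ts,s,t\ne1$; $2ts+\theta'(t-1)+2z-1$ if $ts-2t<z\le ts-t,s,t\ne1$; $(t+1)ts+(t-1)(z+t-1)+2z-1$ if $\upsilon'<z\le ts-2t,s,t\ne1$; $\theta't+z$ if $z\le\upsilon',s,t\ne1$; $t^2+2t+tz-1$ if $s=1,t\ge z,t\ne1$. *)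

From Stdlib Require Import ZArith List Lia Bool.
Import ListNotations.
Open Scope Z_scope.

Definition q_AGE (t z l : Z) : Z :=
  if l =? 0 then t - 1 else Z.min ((z - 1) / l) (t - 1).

Definition Gamma (s t z l : Z) : Z :=
  let theta := t * s + l in
  let q := q_AGE t z l in
  if l =? 0 then
    (if z >? t * s - s then 2 * s * t ^ 2 + 2 * z - 1
     else s * t ^ 2 + 3 * s * t - 2 * s + t * (z - 1) + 1)
  else if l =? z then
    2 * t * s + (t * s + z) * (t - 1) + 2 * z - 1
  (* from here on 0 < lambda < z *)
  else if z >? t * s then
    (q + 2) * t * s + theta * (t - 1) + 2 * z - 1
  else if t * s <? l + s - 1 then
    3 * t * s + theta * (t - 1) + 2 * z - 1
  else if l + s - 1 <? z then
    (if q * l >=? s then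
       2 * t * s + theta * (t - 1) + (q + 2) * z - q - 1
     else
       theta * (t + 1) + q * (z - 1) - 2 * l + z + t * s
       + Z.min 0 (z + s * (1 - t) - l * q - 1))
  else (* z <= lambda + s - 1 <= ts *)
    (if q * l >=? s then
       2 * t * s + theta * (t - 1) + 3 * z + (l + s - 1) * q - l - s - 1
     else
       theta * (t + 1) + q * (s - 1) - 3 * l + 3 * z - 1
       + Z.min 0 (t * s - z + 1 + l * q - s)).

Definition N_AGE (s t z : Z) : Z :=
  if t =? 1 then 2 * s + 2 * z - 1
  else fold_right Z.min (Gamma s t z 0)
         (map (fun l : nat => Gamma s t z (Z.of_nat l)) (seq 0 (S (Z.to_nat z)))).

Definition N_Ent (s t z : Z) : Z :=
  if z >? t * s - s then 2 * s * t ^ 2 + 2 * z - 1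
  else s * t ^ 2 + 3 * s * t - 2 * s + t * z - t + 1.

Definition N_SSMM (s t z : Z) : Z := (t + 1) * (t * s + z) - 1.

Definition N_GCSA_NA (s t z : Z) : Z := 2 * s * t ^ 2 + 2 * z - 1.

Definition p_PolyDot (s t z : Z) : Z :=
  let theta' := 2 * t * s - t in
  if s =? 1 then t - 1 else Z.min ((z - 1) / (theta' - t * s)) (t - 1).

(* z <= upsilon' = max(ts-2t-s+2, (ts-2t+1)/2), with upsilon' rational,
   is equivalent to z <= ts-2t-s+2 or 2z <= ts-2t+1. *)
Definition le_upsilon' (s t z : Z) : bool :=
  orb (z <=? t * s - 2 * t - s + 2) (2 * z <=? t * s - 2 * t + 1).

Definition N_PolyDot (s t z : Z) : Z :=
  let theta' := 2 * t * s - t in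
  let p := p_PolyDot s t z in
  if orb (t * s <? z) (t =? 1) then
    (p + 2) * t * s + theta' * (t - 1) + 2 * z - 1
  else if (s =? 1) then
    t ^ 2 + 2 * t + t * z - 1
  else
  if t * s - t <? z then
    2 * t * s + theta' * (t - 1) + 3 * z - 1
  else if t * s - 2 * t <? z then
    2 * t * s + theta' * (t - 1) + 2 * z - 1
  else if negb (le_upsilon' s t z) then
    (t + 1) * t * s + (t - 1) * (z + t - 1) + 2 * z - 1
  else
    theta' * t + z.

(* Each baseline is matched by a specific choice of lambda in Gamma: lambda = 0
   gives exactly Entangled-CMPC, lambda = z gives exactly SSMM, and for s, t >= 2
   lambda = ts - t gives exactly PolyDot when z > ts, while lambda = ts - t - s + 2
   (for which q = 1) beats PolyDot when ts - t < z <= ts.  In the remaining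
   PolyDot regimes, and for GCSA-NA, the baseline already dominates SSMM or
   Entangled-CMPC. *)

From Stdlib Require Import ZArith List Lia.
Open Scope Z_scope.

Lemma fold_right_min_le (a x : Z) (xs : list Z) :
  In x xs -> fold_right Z.min a xs <= x.
Proof.
  induction xs as [|y xs IH]; simpl; [tauto|].
  intros [<-|Hx]; [lia|]. specialize (IH Hx). lia.
Qed.

Lemma N_AGE_le_Gamma (s t z l : Z) :
  t <> 1 -> 0 <= l <= z -> N_AGE s t z <= Gamma s t z l.
Proof.
  intros Ht Hl. unfold N_AGE.
  rewrite (proj2 (Z.eqb_neq t 1) Ht).
  apply fold_right_min_le, in_map_iff.
  exists (Z.to_nat l). rewrite Z2Nat.id by lia.
  split; [reflexivity|apply in_seq; lia].
Qed.

Lemma N_AGE_t1 (s z : Z) : 0 < z -> N_AGE s 1 z = N_Ent s 1 z.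
Proof.
  intros Hz. unfold N_AGE, N_Ent. rewrite Z.eqb_refl.
  replace (z >? 1 * s - s) with true by (symmetry; apply Z.gtb_lt; lia).
  ring.
Qed.

Lemma Gamma_0 (s t z : Z) : Gamma s t z 0 = N_Ent s t z.
Proof.
  unfold Gamma, N_Ent. rewrite Z.eqb_refl.
  destruct (z >? t * s - s); ring.
Qed.

Lemma Gamma_z (s t z : Z) : z <> 0 -> Gamma s t z z = N_SSMM s t z.
Proof.
  intros Hz. unfold Gamma, N_SSMM.
  rewrite (proj2 (Z.eqb_neq z 0) Hz), Z.eqb_refl.
  ring.
Qed.

Lemma N_AGE_le_N_Ent (s t z : Z) : 0 < z -> N_AGE s t z <= N_Ent s t z.
Proof.
  intros Hz. destruct (Z.eq_dec t 1) as [->|Ht].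
  - rewrite N_AGE_t1 by exact Hz. lia.
  - rewrite <- Gamma_0. apply N_AGE_le_Gamma; lia.
Qed.

Lemma N_AGE_le_N_SSMM (s t z : Z) : 0 < z -> N_AGE s t z <= N_SSMM s t z.
Proof.
  intros Hz. destruct (Z.eq_dec t 1) as [->|Ht].
  - rewrite N_AGE_t1 by exact Hz. unfold N_Ent, N_SSMM.
    replace (z >? 1 * s - s) with true by (symmetry; apply Z.gtb_lt; lia).
    lia.
  - rewrite <- Gamma_z by lia. apply N_AGE_le_Gamma; lia.
Qed.

Lemma N_Ent_le_N_GCSA_NA (s t z : Z) :
  0 < t -> 0 < z -> N_Ent s t z <= N_GCSA_NA s t z.
Proof.
  intros Ht Hz. unfold N_Ent, N_GCSA_NA.
  destruct (Z.gtb_spec z (t * s - s)) as [Ez|Ez]; [lia|].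
  (* the difference is (t - 2) (s (t - 1) - z + 1) *)
  destruct (Z.eq_dec t 1) as [->|Ht1]; [lia|].
  assert (0 <= (t - 2) * (s * (t - 1) - z + 1)) by (apply Z.mul_nonneg_nonneg; lia).
  nia.
Qed.

Lemma N_PolyDot_t1 (s z : Z) : 0 < s -> 0 < z -> N_PolyDot s 1 z = N_Ent s 1 z.
Proof.
  intros Hs Hz. unfold N_PolyDot, N_Ent, p_PolyDot.
  rewrite Bool.orb_true_r.
  replace (z >? 1 * s - s) with true by (symmetry; apply Z.gtb_lt; lia).
  destruct (s =? 1) eqn:Es.
  - apply Z.eqb_eq in Es. subst s. ring.
  - apply Z.eqb_neq in Es.
    assert (0 <= (z - 1) / (2 * 1 * s - 1 - 1 * s)) by (apply Z.div_pos; lia).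
    lia.
Qed.

Lemma N_PolyDot_s1 (t z : Z) : 0 < t -> 0 < z -> N_PolyDot 1 t z = N_Ent 1 t z.
Proof.
  intros Ht Hz. destruct (Z.eq_dec t 1) as [->|Ht1].
  { apply N_PolyDot_t1; lia. }
  unfold N_PolyDot, N_Ent, p_PolyDot. rewrite Z.eqb_refl.
  rewrite (proj2 (Z.eqb_neq t 1) Ht1), Bool.orb_false_r.
  destruct (t * 1 <? z) eqn:Ez.
  - apply Z.ltb_lt in Ez.
    replace (z >? t * 1 - 1) with true by (symmetry; apply Z.gtb_lt; lia).
    ring.
  - apply Z.ltb_ge in Ez.
    destruct (z >? t * 1 - 1) eqn:Ez'.
    + apply Z.gtb_lt in Ez'. replace z with t by lia. ring.
    + ring.
Qed.

Lemma Gamma_eq_N_PolyDot_large_z (s t z : Z) :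
  1 < s -> 1 < t -> t * s < z -> Gamma s t z (t * s - t) = N_PolyDot s t z.
Proof.
  intros Hs Ht Hz. unfold Gamma, q_AGE, N_PolyDot, p_PolyDot.
  rewrite (proj2 (Z.eqb_neq (t * s - t) 0)) by nia.
  rewrite (proj2 (Z.eqb_neq (t * s - t) z)) by nia.
  rewrite (proj2 (Z.eqb_neq s 1)) by lia.
  rewrite (proj2 (Z.gtb_lt z (t * s))), (proj2 (Z.ltb_lt (t * s) z)) by lia.
  replace (2 * t * s - t - t * s) with (t * s - t) by ring.
  cbn [orb]. ring.
Qed.

Lemma Gamma_le_N_PolyDot_mid_z (s t z : Z) :
  1 < s -> 1 < t -> t * s - t < z <= t * s ->
  Gamma s t z (t * s - t - s + 2) <= N_PolyDot s t z.
Proof.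
  intros Hs Ht Hz.
  set (l := t * s - t - s + 2).
  assert (Hl : 0 < l < z) by (unfold l; nia).
  assert (Hq : (z - 1) / l = 1).
  { symmetry. apply Z.div_unique with (z - 1 - l); [left|]; unfold l in *; nia. }
  unfold Gamma, q_AGE, N_PolyDot.
  rewrite (proj2 (Z.eqb_neq l 0)), (proj2 (Z.eqb_neq l z)) by lia.
  rewrite Hq, Z.min_l by lia.
  rewrite Z.gtb_ltb, (proj2 (Z.ltb_ge (t * s) z)),
    (proj2 (Z.ltb_ge (t * s) (l + s - 1))) by (unfold l; lia).
  rewrite (proj2 (Z.geb_le (1 * l) s)) by (unfold l; nia).
  rewrite (proj2 (Z.eqb_neq t 1)), (proj2 (Z.eqb_neq s 1)),
    (proj2 (Z.ltb_lt (t * s - t) z)) by lia.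
  (* both branches give 2ts + theta (t - 1) + 3z - 2, with theta = theta' - (s - 2) *)
  cbn [orb]. destruct (l + s - 1 <? z); unfold l; nia.
Qed.

Lemma N_SSMM_le_N_PolyDot_small_z (s t z : Z) :
  1 < s -> 1 < t -> z <= t * s - t -> N_SSMM s t z <= N_PolyDot s t z.
Proof.
  intros Hs Ht Hz. unfold N_SSMM, N_PolyDot.
  rewrite (proj2 (Z.ltb_ge (t * s) z)), (proj2 (Z.eqb_neq t 1)),
    (proj2 (Z.eqb_neq s 1)), (proj2 (Z.ltb_ge (t * s - t) z)) by lia.
  (* PolyDot - SSMM is (t - 1)(ts - t - z), (t - 1)^2 and t (ts - s - t - z) + 1
     in the three regimes; both descriptions of upsilon' force ts - s - t - z >= 0 *)
  cbn [orb].
  destruct (t * s - 2 * t <? z) eqn:E2; [nia|].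
  destruct (le_upsilon' s t z) eqn:Eu; cbn [negb]; [|nia].
  unfold le_upsilon' in Eu.
  apply Bool.orb_true_iff in Eu as [Eu|Eu]; apply Z.leb_le in Eu; nia.
Qed.

Lemma N_AGE_le_N_PolyDot (s t z : Z) :
  0 < s -> 0 < t -> 0 < z -> N_AGE s t z <= N_PolyDot s t z.
Proof.
  intros Hs Ht Hz.
  destruct (Z.eq_dec s 1) as [->|Hs1].
  { rewrite N_PolyDot_s1 by lia. apply N_AGE_le_N_Ent, Hz. }
  destruct (Z.eq_dec t 1) as [->|Ht1].
  { rewrite N_PolyDot_t1 by lia. apply N_AGE_le_N_Ent, Hz. }
  destruct (Z_lt_le_dec (t * s) z) as [Hlarge|Hts].
  - rewrite <- Gamma_eq_N_PolyDot_large_z by lia.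
    apply N_AGE_le_Gamma; nia.
  - destruct (Z_lt_le_dec (t * s - t) z) as [Hmid|Hsmall].
    + eapply Z.le_trans; [|apply Gamma_le_N_PolyDot_mid_z; lia].
      apply N_AGE_le_Gamma; nia.
    + eapply Z.le_trans; [|apply N_SSMM_le_N_PolyDot_small_z; lia].
      apply N_AGE_le_N_SSMM, Hz.
Qed.

Theorem lemma4 (s t z : Z) (hs : 0 < s) (ht : 0 < t) (hz : 0 < z) :
  N_AGE s t z <= N_Ent s t z /\
  N_AGE s t z <= N_SSMM s t z /\
  N_AGE s t z <= N_GCSA_NA s t z /\
  (~ (s = 1 /\ t = 1) -> N_AGE s t z <= N_PolyDot s t z).
Proof.
  split; [|split; [|split]].
  - apply N_AGE_le_N_Ent, hz.
  - apply N_AGE_le_N_SSMM, hz.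
  - eapply Z.le_trans; [apply N_AGE_le_N_Ent, hz|apply N_Ent_le_N_GCSA_NA; assumption].
  -
    intros _. apply N_AGE_le_N_PolyDot; assumption.
Qed.
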